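(* Let $R$ be a ring, $M$ a left $R$-module and $N$ a submodule of $M$. (1) $N$ is a completely hollow submodule of $M$ if and only if $N$ is a local module. (2) $N$ is completely strongly hollow in $M$ if and only if $N$ is a local module and strongly hollow in $M$.
   Context: $N$ is a completely hollow submodule if for every family $(K_i)_{i\in I}$ of submodules of $N$ with $\sum_i K_i=N$ there is $i$ with $K_i=N$. $N$ is completely strongly hollow in $M$ if for every family $(K_i)_{i\in I}$ of submodules of $M$ with $N\subseteq\sum_iK_i$ there is $i$ with $N\subseteq K_i$. $N$ is strongly hollow in $M$ if for all submodules $K,L$ of $M$, $N\subseteq K+L$ implies $N\subseteq K$ or $N\subseteq L$. A module is hollow if whenever it equals $K+L$ for submodules $K,L$, then $K$ or $L$ is the whole module; a local module is a nonzero cyclic hollow module. *)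

From HB Require Import structures.
From mathcomp Require Import all_boot all_algebra.
Set Implicit Arguments. Unset Strict Implicit. Unset Printing Implicit Defensive.
Import GRing.Theory.
Local Open Scope ring_scope.

(* Left R-modules are MathComp's [lmodType R] over a (possibly noncommutative)
   ring [R : pzRingType]. Subsets of M are predicates [M -> Prop]. *)

Section ModDefs.
Variables (R : pzRingType) (M : lmodType R).

Definition subsetM (A B : M -> Prop) : Prop := forall x, A x -> B x.
Definition eqsetM (A B : M -> Prop) : Prop := forall x, A x <-> B x.

Definition submod (S : M -> Prop) : Prop :=
  [/\ S 0, (forall x y, S x -> S y -> S (x + y)) & (forall (a : R) x, S x -> S (a *: x))].

Definition sum2 (K L : M -> Prop) : M -> Prop :=
  fun x => exists y z, [/\ K y, L z & x = y + z].

Definition sumfam (I : Type) (K : I -> M -> Prop) : M -> Prop :=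
  fun x => exists (n : nat) (idx : 'I_n -> I) (v : 'I_n -> M),
      (forall j, K (idx j) (v j)) /\ x = \sum_(j < n) v j.

Definition cyclic_mod (N : M -> Prop) : Prop :=
  exists m : M, eqsetM N (fun x => exists r : R, x = r *: m).

Definition hollow (N : M -> Prop) : Prop :=
  forall K L : M -> Prop, submod K -> submod L -> subsetM K N -> subsetM L N ->
    eqsetM N (sum2 K L) -> eqsetM K N \/ eqsetM L N.

Definition local_mod (N : M -> Prop) : Prop :=
  (exists x, N x /\ x != 0) /\ cyclic_mod N /\ hollow N.

Definition completely_hollow (N : M -> Prop) : Prop :=
  forall (I : Type) (K : I -> M -> Prop),
    (forall i, submod (K i) /\ subsetM (K i) N) ->
    eqsetM (sumfam K) N -> exists i, eqsetM (K i) N.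

Definition completely_strongly_hollow (N : M -> Prop) : Prop :=
  forall (I : Type) (K : I -> M -> Prop),
    (forall i, submod (K i)) ->
    subsetM N (sumfam K) -> exists i, subsetM N (K i).

Definition strongly_hollow (N : M -> Prop) : Prop :=
  forall K L : M -> Prop, submod K -> submod L ->
    subsetM N (sum2 K L) -> subsetM N K \/ subsetM N L.

End ModDefs.

From mathcomp Require Import all_boot all_algebra.
From Stdlib Require Import Classical.
Set Implicit Arguments. Unset Strict Implicit. Unset Printing Implicit Defensive.
Import GRing.Theory.
Local Open Scope ring_scope.

(* A completely (strongly) hollow N is covered by the family of its cyclic
   submodules R x, x in N, hence lies in one of them and is cyclic; the empty
   family shows N <> 0 and two-member families give (strong) hollowness.
   Conversely, if N = R m is nonzero and m = v_1 + ... + v_n with v_j in K_(i_j),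
   then N lies in K_(i_1) + R (v_2 + ... + v_n); (strong) hollowness puts N in
   K_(i_1) or in R (v_2 + ... + v_n), and peeling off the summands one at a time
   ends either in some K_i or in R 0 = 0. *)

Section HollowSubmodules.
Variables (R : pzRingType) (M : lmodType R).

Definition span1 (m : M) : M -> Prop := fun x => exists r : R, x = r *: m.

Definition pair_fam (K L : M -> Prop) : bool -> M -> Prop :=
  fun b => if b then K else L.

Lemma submod_span1 m : submod (span1 m).
Proof.
split; first by exists 0; rewrite scale0r.
- by move=> x y [r ->] [s ->]; exists (r + s); rewrite scalerDl.
- by move=> a x [r ->]; exists (a * r); rewrite scalerA.
Qed.

Lemma span1_self m : span1 m m.
Proof. by exists 1; rewrite scale1r. Qed.

Lemma span1_sub (N : M -> Prop) m : submod N -> N m -> subsetM (span1 m) N.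
Proof. by case=> _ _ NZ Nm x [r ->]; apply: NZ. Qed.

Lemma span1D_sub_sum2 (K : M -> Prop) y s : submod K -> K y ->
  subsetM (span1 (y + s)) (sum2 K (span1 s)).
Proof.
case=> _ _ KZ Ky x [r ->]; exists (r *: y), (r *: s); split.
- exact: KZ.
- by exists r.
- by rewrite scalerDr.
Qed.

Lemma sum2_sub (N K L : M -> Prop) : submod N ->
  subsetM K N -> subsetM L N -> subsetM (sum2 K L) N.
Proof. by case=> _ ND _ KN LN x [y [z [Ky Lz ->]]]; apply: ND; [apply: KN|apply: LN]. Qed.

Lemma sumfam_sub (I : Type) (K : I -> M -> Prop) (N : M -> Prop) :
  submod N -> (forall i, subsetM (K i) N) -> subsetM (sumfam K) N.
Proof.
case=> N0 ND _ KN x [n [idx [v [Kv ->]]]].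
by elim/big_ind: _ => // j _; apply: (KN (idx j)).
Qed.

Lemma sumfam_member (I : Type) (K : I -> M -> Prop) i x : K i x -> sumfam K x.
Proof.
by move=> Kx; exists 1%N, (fun _ => i), (fun _ => x); rewrite big_ord1.
Qed.

Lemma sumfam_empty (K : Empty_set -> M -> Prop) x : sumfam K x <-> x = 0.
Proof.
split=> [[[|n] [idx [v [_ ->]]]]|->]; first by rewrite big_ord0.
  by case: (idx ord0).
have idx : 'I_0 -> Empty_set by case.
by exists 0%N, idx, (fun _ => 0); rewrite big_ord0; split=> // - [].
Qed.

Lemma sumfam_pair (K L : M -> Prop) : submod K -> submod L ->
  eqsetM (sumfam (pair_fam K L)) (sum2 K L).
Proof.
move=> [K0 KD _] [L0 LD _] x; split.
- move=> [n [idx [v [Kv ->]]]]; elim/big_ind: _.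
  + by exists 0, 0; rewrite addr0.
  + move=> _ _ [a1 [a2 [Ka1 La2 ->]]] [b1 [b2 [Kb1 Lb2 ->]]].
    by exists (a1 + b1), (a2 + b2); rewrite addrACA; split; [apply: KD|apply: LD|].
  + move=> j _; move: (Kv j); rewrite /pair_fam; case: (idx j) => Hv.
    * by exists (v j), 0; rewrite addr0.
    * by exists 0, (v j); rewrite add0r.
- move=> [y [z [Ky Lz ->]]].
  exists 2%N, (fun j => val j == 0%N), (fun j => if val j == 0%N then y else z).
  split; first by case=> [[|[|j]] Hj].
  by rewrite !big_ord_recl big_ord0 /= addr0.
Qed.

Lemma submod_pair_fam (K L : M -> Prop) :
  submod K -> submod L -> forall b, submod (pair_fam K L b).
Proof. by move=> sK sL []. Qed.

Lemma pair_fam_sub (N K L : M -> Prop) :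
  subsetM K N -> subsetM L N -> forall b, subsetM (pair_fam K L b) N.
Proof. by move=> KN LN []. Qed.

Lemma exists_nonzero (N : M -> Prop) :
  ~ (forall x, N x -> x = 0) -> exists x, N x /\ x != 0.
Proof.
move=> N_neq0; apply: NNPP => N_nz; apply: N_neq0 => x Nx.
by case: (eqVneq x 0) => // x_nz; case: N_nz; exists x.
Qed.

Section PeelingCover.
Variables (I : Type) (K : I -> M -> Prop) (N : M -> Prop).
Hypothesis submodK : forall i, submod (K i).
Hypothesis peel : forall i s, sumfam K s ->
  subsetM N (sum2 (K i) (span1 s)) -> subsetM N (K i) \/ subsetM N (span1 s).

Lemma span1_sumfam_cover s : sumfam K s -> subsetM N (span1 s) ->
  (exists i, subsetM N (K i)) \/ (forall x, N x -> x = 0).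
Proof.
move=> [n [idx [v [Kv ->]]]]; elim: n idx v Kv => [|n IH] idx v Kv Nv.
  by right=> x /Nv [r ->]; rewrite big_ord0 scaler0.
move: Nv; rewrite big_ord_recl => Nv.
have Ktail : sumfam K (\sum_(j < n) v (lift ord0 j)).
  by exists n, (fun j => idx (lift ord0 j)), (fun j => v (lift ord0 j)).
have N_sum2 := fun x Nx => span1D_sub_sum2 (submodK _) (Kv ord0) (Nv x Nx).
case: (peel Ktail N_sum2) => [NK|Ntail]; first by left; exists (idx ord0).
exact: (IH _ _ (fun j => Kv (lift ord0 j)) Ntail).
Qed.

Lemma local_sumfam_cover m : (exists x, N x /\ x != 0) ->
  N m -> subsetM N (span1 m) -> subsetM N (sumfam K) ->
  exists i, subsetM N (K i).
Proof.
move=> [x [Nx x_nz]] Nm Nspan NK.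
case: (span1_sumfam_cover (NK m Nm) Nspan) => // N0.
by move: x_nz; rewrite (N0 x Nx) eqxx.
Qed.

End PeelingCover.

Section FixedSubmodule.
Variable N : M -> Prop.
Hypothesis submodN : submod N.

Lemma hollow_sub_sum2 : hollow N -> forall K L, submod K -> submod L ->
  subsetM K N -> subsetM L N -> subsetM N (sum2 K L) ->
  subsetM N K \/ subsetM N L.
Proof.
move=> hN K L sK sL KN LN Nsum.
have N_eq : eqsetM N (sum2 K L).
  by move=> x; split; [apply: Nsum|apply: sum2_sub].
by case: (hN K L sK sL KN LN N_eq) => eqN; [left|right] => x /eqN.
Qed.

Lemma completely_strongly_hollow_completely_hollow :
  completely_strongly_hollow N -> completely_hollow N.
Proof.
move=> csh I K sK K_eq.
have [i NK] := csh I K (fun i => (sK i).1) (fun x => proj2 (K_eq x)).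
by exists i => x; split; [apply: (sK i).2|apply: NK].
Qed.

Lemma completely_strongly_hollow_strongly_hollow :
  completely_strongly_hollow N -> strongly_hollow N.
Proof.
move=> csh K L sK sL Nsum.
have [[] NKL] := csh _ _ (submod_pair_fam sK sL)
  (fun x Nx => proj2 (sumfam_pair sK sL x) (Nsum x Nx)).
- by left.
- by right.
Qed.

Definition cyclic_cover : {x : M | N x} -> M -> Prop := fun p => span1 (sval p).

Lemma cyclic_cover_sub p : subsetM (cyclic_cover p) N.
Proof. by case: p => x Nx; apply: span1_sub. Qed.

Lemma sumfam_cyclic_cover : eqsetM (sumfam cyclic_cover) N.
Proof.
move=> x; split; first exact: sumfam_sub submodN cyclic_cover_sub x.
by move=> Nx; apply: (@sumfam_member _ _ (exist _ x Nx)); apply: span1_self.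
Qed.

Lemma completely_hollow_neq0 : completely_hollow N -> exists x, N x /\ x != 0.
Proof.
move=> ch; apply: exists_nonzero => N0.
case: (ch Empty_set (fun _ => N) (fun i => match i with end)) => [x|[]//].
by rewrite sumfam_empty; split=> [->|/N0 //]; case: submodN.
Qed.

Lemma completely_hollow_cyclic : completely_hollow N -> cyclic_mod N.
Proof.
move=> ch; have [[m Nm] eqN] := ch _ cyclic_cover
  (fun p => conj (submod_span1 _) (@cyclic_cover_sub p)) sumfam_cyclic_cover.
by exists m => x; rewrite -eqN.
Qed.

Lemma completely_hollow_hollow : completely_hollow N -> hollow N.
Proof.
move=> ch K L sK sL KN LN N_eq.
have [[] KL_eq] := ch _ (pair_fam K L)
  (fun b => conj (submod_pair_fam sK sL b) (pair_fam_sub KN LN (b:=b)))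
  (fun x => iff_trans (sumfam_pair sK sL x) (iff_sym (N_eq x))).
- by left.
- by right.
Qed.

Lemma completely_hollow_local : completely_hollow N -> local_mod N.
Proof.
move=> ch; split; first exact: completely_hollow_neq0.
by split; [apply: completely_hollow_cyclic|apply: completely_hollow_hollow].
Qed.

Lemma local_completely_hollow : local_mod N -> completely_hollow N.
Proof.
move=> [N_nz [[m eqN] hN]] I K sK K_eq.
have peel i s : sumfam K s -> subsetM N (sum2 (K i) (span1 s)) ->
    subsetM N (K i) \/ subsetM N (span1 s).
  move=> Ks; apply: hollow_sub_sum2 => //; [exact: (sK i).1|exact: submod_span1|
    exact: (sK i).2|].
  by apply: span1_sub => //; apply: sumfam_sub submodN (fun i => (sK i).2) s Ks.
have [i NK] := local_sumfam_cover (fun i => (sK i).1) peel N_nz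
  (proj2 (eqN m) (span1_self m)) (fun x => proj1 (eqN x)) (fun x => proj2 (K_eq x)).
by exists i => x; split; [apply: (sK i).2|apply: NK].
Qed.

Lemma local_strongly_hollow_completely_strongly_hollow :
  local_mod N -> strongly_hollow N -> completely_strongly_hollow N.
Proof.
move=> [N_nz [[m eqN] _]] sh I K sK.
have peel i s : sumfam K s -> subsetM N (sum2 (K i) (span1 s)) ->
    subsetM N (K i) \/ subsetM N (span1 s).
  by move=> _; apply: sh => //; apply: submod_span1.
exact: (local_sumfam_cover sK peel N_nz (proj2 (eqN m) (span1_self m))
  (fun x => proj1 (eqN x))).
Qed.

End FixedSubmodule.
End HollowSubmodules.

Theorem lemma2p3 (R : pzRingType) (M : lmodType R) (N : M -> Prop) :
  submod N ->
  (completely_hollow N <-> local_mod N) /\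
  (completely_strongly_hollow N <-> local_mod N /\ strongly_hollow N).
Proof.
move=> sN; split; split.
- exact: completely_hollow_local.
- exact: local_completely_hollow.
- move=> csh; split; last exact: completely_strongly_hollow_strongly_hollow.
  exact/completely_hollow_local/completely_strongly_hollow_completely_hollow.
- by case; apply: local_strongly_hollow_completely_strongly_hollow.
Qed.
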